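(* Let $N,T,U$ be integers with $0\le T<U\le N$, let $\mathbb{F}_q$ be a finite field, let $d$ be divisible by $U-T$, and let $W\in\mathbb{F}_q^{U\times N}$ be a $T$-private MDS matrix with columns $W_1,\dots,W_N$. For each $i\in[N]$, let $\mathbf{z}_i$ be uniformly random in $\mathbb{F}_q^d$, partitioned into $[\mathbf{z}_i]_1,\dots,[\mathbf{z}_i]_{U-T}\in\mathbb{F}_q^{d/(U-T)}$, let $[\mathbf{n}_i]_{U-T+1},\dots,[\mathbf{n}_i]_U\in\mathbb{F}_q^{d/(U-T)}$ be random, and set $[\tilde{\mathbf{z}}_i]_j=([\mathbf{z}_i]_1,\dots,[\mathbf{z}_i]_{U-T},[\mathbf{n}_i]_{U-T+1},\dots,[\mathbf{n}_i]_U)\cdot W_j$ for $j\in[N]$, where all $\mathbf{z}_i$'s and $[\mathbf{n}_i]_k$'s are mutually independent across users. Then for any $\mathcal{T}\subseteq[N]$ of size $T$ and any $\mathcal{U}_1\subseteq[N]$ with $|\mathcal{U}_1|\ge U$, if the random masks $[\mathbf{n}_i]_k$'s are jointly uniformly random, we have $$I\big(\{\mathbf{z}_i\}_{i\in[N]\setminus\mathcal{T}};\ \{\mathbf{z}_i\}_{i\in\mathcal{T}},\{[\tilde{\mathbf{z}}_j]_i\}_{j\in[N],\,i\in\mathcal{T}}\big)=0.$$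
   Context: A matrix $W\in\mathbb{F}_q^{U\times N}$ is MDS if every $U\times U$ submatrix of $W$ is invertible; it is $T$-private MDS if, in addition, the $T\times N$ submatrix formed by its rows $U-T+1,\dots,U$ is MDS (every $T\times T$ submatrix of it is invertible). The product of the row of vectors with the column $W_j$ means the linear combination $\sum_{k=1}^U W_{k,j}\,v_k$ of the $U$ vectors $v_k\in\mathbb{F}_q^{d/(U-T)}$. $I(\cdot;\cdot)$ denotes mutual information. *)

From HB Require Import structures.
From mathcomp Require Import all_boot all_order all_algebra all_field.
From mathcomp Require Import reals exp.
Set Implicit Arguments. Unset Strict Implicit. Unset Printing Implicit Defensive.
Import Order.TTheory GRing.Theory Num.Theory.
Local Open Scope ring_scope.

Definition is_MDS (F : fieldType) (a b : nat) (W : 'M[F]_(a, b)) : Prop :=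
  forall f : 'I_a -> 'I_b, injective f -> colsub f W \in unitmx.

(* W (U x N) is T-private MDS: W is MDS and the T x N submatrix formed by its
   last T rows (rows U-T+1..U, i.e. 0-based indices U-T .. U-1) is MDS. *)
Definition is_private_MDS (F : fieldType) (U N T : nat) (W : 'M[F]_(U, N)) : Prop :=
  is_MDS W /\
  forall s : 'I_T -> 'I_U, (forall i : 'I_T, val (s i) = (U - T + i)%N) ->
    is_MDS (rowsub s W).

Definition block (F : fieldType) (d m : nat) (z : 'rV[F]_d) (k : nat) : 'rV[F]_m :=
  \row_(l < m) nth 0 [seq z 0 i | i <- enum 'I_d] (k * m + l).

(* the k-th (0-based, k < U) vector of the row
   ([z]_1, ..., [z]_{U-T}, [n]_{U-T+1}, ..., [n]_U) *)
Definition share_vec (F : fieldType) (U T d m : nat) (z : 'rV[F]_d)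
    (n : T.-tuple 'rV[F]_m) (k : 'I_U) : 'rV[F]_m :=
  if (k < U - T)%N then block m z k else nth 0 n (k - (U - T)).

Definition share (F : fieldType) (U N T d m : nat) (W : 'M[F]_(U, N))
    (z : 'rV[F]_d) (n : T.-tuple 'rV[F]_m) (j : 'I_N) : 'rV[F]_m :=
  \sum_(k < U) W k j *: share_vec z n k.

Definition prob (R : realType) (Omega : finType) (P : {ffun Omega -> R})
    (E : pred Omega) : R := \sum_(w | E w) P w.

Definition uniform_pmf (R : realType) (Omega : finType) : {ffun Omega -> R} :=
  [ffun _ => (#|Omega|%:R)^-1].

Definition mutual_info (R : realType) (Omega A B : finType)
    (P : {ffun Omega -> R}) (X : Omega -> A) (Y : Omega -> B) : R :=
  \sum_(a : A) \sum_(b : B)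
    let pab := prob P (fun w => (X w == a) && (Y w == b)) in
    if pab == 0 then 0
    else pab * ln (pab / (prob P (fun w => X w == a) * prob P (fun w => Y w == b))).

From HB Require Import structures.
From mathcomp Require Import all_boot all_order all_algebra all_field.
From mathcomp Require Import reals exp.
Set Implicit Arguments. Unset Strict Implicit. Unset Printing Implicit Defensive.
Import Order.TTheory GRing.Theory Num.Theory.
Local Open Scope ring_scope.

(* The T masks of a user enter its shares only
   through the last T rows of W, and the colluders in T see T columns of that
   T x N MDS block: for each user, masks and observed shares are therefore in
   bijection.  Hence shifting the honest users' secrets by any amount, while
   re-solving every user's masks so that all observed shares stay the same, is
   a permutation of the sample space.  It carries the event {X = a, Y = b} onto
   {X = a', Y = b}, so under the uniform law the joint probability does not
   depend on a, which forces the mutual information to vanish. *)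

Section MutualInfo.

Variables (R : realType) (Omega : finType).

Lemma uniform_pmf_sum1 : (0 < #|Omega|)%N ->
  \sum_w uniform_pmf R Omega w = 1.
Proof.
move=> Omega_gt0; under eq_bigr do rewrite ffunE.
by rewrite sumr_const -[_ *+ _]mulr_natr mulVf // pnatr_eq0 -lt0n.
Qed.

Lemma prob_uniform_inj (g : Omega -> Omega) (E : pred Omega) : injective g ->
  prob (uniform_pmf R Omega) (E \o g) = prob (uniform_pmf R Omega) E.
Proof.
move=> g_inj; rewrite /prob [RHS](reindex_inj g_inj).
by apply: eq_bigr => w _; rewrite !ffunE.
Qed.

Lemma mutual_info_eq0 (A B : finType) (P : {ffun Omega -> R})
    (X : Omega -> A) (Y : Omega -> B) :
  \sum_w P w = 1 ->
  (forall a a' b, prob P (fun w => (X w == a) && (Y w == b)) =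
                  prob P (fun w => (X w == a') && (Y w == b))) ->
  mutual_info P X Y = 0.
Proof.
move=> P1 joint_const.
pose pXY a b := prob P (fun w => (X w == a) && (Y w == b)).
have pX_sum a : prob P (fun w => X w == a) = \sum_b pXY a b.
  by rewrite /prob (partition_big Y predT).
have pY a b : prob P (fun w => Y w == b) = #|A|%:R * pXY a b.
  rewrite /prob (partition_big X predT) //= mulr_natl -[_ *+ _]sumr_const.
  apply: eq_bigr => a' _; rewrite /pXY (joint_const a a' b).
  by apply: eq_bigl => w; rewrite andbC.
have pX a : #|A|%:R * prob P (fun w => X w == a) = 1.
  rewrite -[RHS]P1 [RHS](partition_big X predT) //= mulr_natl -[_ *+ _]sumr_const.
  apply: eq_bigr => a' _; rewrite -/(prob P (fun w => X w == a')) !pX_sum.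
  by apply: eq_bigr => b _; apply: joint_const.
rewrite /mutual_info; apply: big1 => a _; apply: big1 => b _ /=.
case: ifP => // /negbT pab_neq0.
by rewrite (pY a) mulrA [_ * #|A|%:R]mulrC pX mul1r divff // ln1 mulr0.
Qed.

End MutualInfo.

Section Shares.

Variables (F : fieldType) (U N T d m : nat) (W : 'M[F]_(U, N)).
Hypothesis leTU : (T <= U)%N.

Definition mask_row (t : 'I_T) : 'I_U :=
  Ordinal (leq_trans (etrans (ltn_add2l (U - T) t T) (ltn_ord t)) (eq_leq (subnK leTU))).

Lemma mask_row_inj : injective mask_row.
Proof. by move=> t1 t2 /(congr1 val) /addnI /val_inj. Qed.

Lemma share_vec_mask (z : 'rV[F]_d) (n : T.-tuple 'rV[F]_m) (t : 'I_T) :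
  share_vec z n (mask_row t) = nth 0 n t.
Proof. by rewrite /share_vec /= ltnNge leq_addr /= addKn. Qed.

Lemma share_vec_indep_masks (z : 'rV[F]_d) (n n' : T.-tuple 'rV[F]_m) (k : 'I_U) :
  k \notin codom mask_row -> share_vec z n k = share_vec z n' k.
Proof.
move=> k_notmask; rewrite /share_vec; case: ifP => // /negbT.
rewrite -leqNgt => k_ge; have k_lt : (k - (U - T) < T)%N.
  by rewrite ltn_subLR // subnK.
case/negP: k_notmask; apply/codomP; exists (Ordinal k_lt); apply: val_inj.
by rewrite /= subnKC.
Qed.

Lemma shareB_masks (z : 'rV[F]_d) (n n' : T.-tuple 'rV[F]_m) (j : 'I_N) :
  share W z n j - share W z n' j =
  \sum_(t < T) W (mask_row t) j *: (nth 0 n t - nth 0 n' t).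
Proof.
rewrite /share -sumrB; under eq_bigr do rewrite -scalerBr.
rewrite (bigID (mem (codom mask_row))) /= [X in _ + X]big1 ?addr0; last first.
  by move=> k /(share_vec_indep_masks z n n') ->; rewrite subrr scaler0.
rewrite -big_uniq /=; last by rewrite map_inj_uniq ?enum_uniq //; exact: mask_row_inj.
by rewrite big_image; apply: eq_bigr => t _; rewrite !share_vec_mask.
Qed.

Definition shares_on (S : {set 'I_N}) (z : 'rV[F]_d) (n : T.-tuple 'rV[F]_m) :
    {ffun {i : 'I_N | i \in S} -> 'rV[F]_m} :=
  [ffun i => share W z n (val i)].

Lemma shares_on_inj (S : {set 'I_N}) (z : 'rV[F]_d) :
  is_private_MDS T W -> #|S| = T -> injective (shares_on S z).
Proof.
move=> [_ W_masks_MDS] cardS n n' /ffunP eq_shares.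
pose f (t : 'I_T) : 'I_N := enum_val (cast_ord (esym cardS) t).
have f_inj : injective f by move=> t1 t2 /enum_val_inj /cast_ord_inj.
pose M := colsub f (rowsub mask_row W).
have M_unit : M^T \in unitmx.
  by rewrite unitmx_tr; apply: W_masks_MDS.
pose D : 'M[F]_(T, m) := \matrix_(t, l) (nth 0 n t - nth 0 n' t) 0 l.
have MD0 : M^T *m D = 0.
  apply/matrixP => t l; rewrite !mxE.
  have /eqP := eq_shares (exist _ (f t) (enum_valP _)).
  rewrite !ffunE -subr_eq0 shareB_masks => /eqP /rowP /(_ l).
  rewrite summxE mxE => shares_eq; rewrite -[RHS]shares_eq.
  by apply: eq_bigr => t' _; rewrite !mxE.
have D0 : D = 0 by rewrite -[D](mulKmx M_unit) MD0 mulmx0.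
apply: eq_from_tnth => t; rewrite !(tnth_nth 0); apply/rowP => l.
by apply/eqP; rewrite -subr_eq0; have /matrixP/(_ t l) := D0; rewrite !mxE => ->.
Qed.

End Shares.

Section FiniteField.

Variables (F : finFieldType) (U N T d m : nat) (W : 'M[F]_(U, N)).
Hypotheses (leTU : (T <= U)%N) (W_MDS : is_private_MDS T W).
Variables (S : {set 'I_N}) (cardS : #|S| = T).

Definition masks_of_shares (z : 'rV[F]_d) (y : {ffun {i : 'I_N | i \in S} -> 'rV[F]_m}) :
    T.-tuple 'rV[F]_m :=
  odflt [tuple 0 | _ < T] [pick n | shares_on W S z n == y].

Lemma masks_of_sharesK (z : 'rV[F]_d) y :
  shares_on W S z (masks_of_shares z y) = y.
Proof.
have /codomP[n ->] : y \in codom (shares_on W S z : T.-tuple 'rV_m -> _).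
  apply: inj_card_onto; first exact: shares_on_inj.
  have card_sigS : #|[pred i in S]| = T by rewrite -cardS; apply: eq_card.
  by rewrite card_ffun card_tuple card_sig card_sigS.
rewrite /masks_of_shares; case: pickP => [n' /eqP // | /(_ n)].
by rewrite eqxx.
Qed.

Definition sample := ({ffun 'I_N -> 'rV[F]_d} * {ffun 'I_N -> T.-tuple 'rV[F]_m})%type.

Definition shift_secrets (delta : {ffun 'I_N -> 'rV[F]_d}) (w : sample) : sample :=
  ([ffun j => w.1 j + delta j],
   [ffun j => masks_of_shares (w.1 j + delta j) (shares_on W S (w.1 j) (w.2 j))]).

Lemma shift_secrets_inj delta : injective (shift_secrets delta).
Proof.
move=> [z1 n1] [z2 n2] [/ffunP eq_z /ffunP eq_n].
have ez : z1 = z2 by apply/ffunP => j; have := eq_z j; rewrite !ffunE => /addIr.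
subst z2; congr pair; apply/ffunP => j; have := eq_n j; rewrite !ffunE.
move=> /(congr1 (shares_on W S (z1 j + delta j))).
by rewrite !masks_of_sharesK => /shares_on_inj; apply.
Qed.

Lemma shares_on_shift_secrets delta w j :
  shares_on W S ((shift_secrets delta w).1 j) ((shift_secrets delta w).2 j) =
  shares_on W S (w.1 j) (w.2 j).
Proof. by rewrite !ffunE masks_of_sharesK. Qed.

End FiniteField.

Theorem lemma1 (R : realType) (F : finFieldType) (N T U d : nat)
  (hTU : (T < U)%N) (hUN : (U <= N)%N) (hd : (U - T %| d)%N)
  (W : 'M[F]_(U, N)) (hW : is_private_MDS T W)
  (Tset : {set 'I_N}) (hT : #|Tset| = T)
  (U1 : {set 'I_N}) (hU1 : (U <= #|U1|)%N) :
  let m := (d %/ (U - T))%N in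
  let Omega := ({ffun 'I_N -> 'rV[F]_d} * {ffun 'I_N -> T.-tuple 'rV[F]_m})%type in
  let X := fun w : Omega =>
    [ffun i : {i : 'I_N | i \notin Tset} => w.1 (val i)] in
  let Y := fun w : Omega =>
    ([ffun i : {i : 'I_N | i \in Tset} => w.1 (val i)],
     [ffun p : ('I_N * {i : 'I_N | i \in Tset})%type =>
        share W (w.1 p.1) (w.2 p.1) (val p.2)]) in
  mutual_info (uniform_pmf R Omega) X Y = 0.
Proof.
move=> m Omega X Y.
apply: mutual_info_eq0.
  by apply/uniform_pmf_sum1/card_gt0P; exists ([ffun=> 0], [ffun=> [tuple 0 | _ < T]]).
move=> a a' b.
pose delta := [ffun j => if insub j is Some i then a' i - a i else 0].
pose g : Omega -> Omega := shift_secrets W Tset delta.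
have g_inj : injective g by apply: shift_secrets_inj; [exact: ltnW | exact: hW | exact: hT].
have gY w : Y (g w) = Y w.
  congr pair; apply/ffunP => i; rewrite !ffunE.
    by rewrite insubN ?addr0 // negbK (valP i).
  by have /ffunP/(_ i.2) := shares_on_shift_secrets (ltnW hTU) hW hT delta w i.1; rewrite !ffunE.
have gX w : (X (g w) == a') = (X w == a).
  apply/eqP/eqP => /ffunP eqX; apply/ffunP => i; have := eqX i;
    rewrite !ffunE /= valK.
    by move/(canRL (addrK _)) ->; rewrite opprB addrC subrK.
  by move=> ->; rewrite addrC subrK.
rewrite -[RHS](prob_uniform_inj _ _ g_inj); apply: eq_bigl => w /=.
by rewrite gX gY.
Qed.
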